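(* Let $(A,\circ)$ be a Novikov algebra, $\{a,b\}=a\circ b+b\circ a$ and $[a,b]=a\circ b-b\circ a$. Then for all $a,b,c,d\in A$, $$\{[c,a],[b,d]\}=\{d\circ c,a\circ b\}+\{c\circ d,b\circ a\}-\{b\circ c,a\circ d\}-\{c\circ b,d\circ a\}.$$
   Context: A (right) Novikov algebra is an algebra $(A,\circ)$ satisfying $a\circ(b\circ c)-(a\circ b)\circ c=a\circ(c\circ b)-(a\circ c)\circ b$ and $a\circ(b\circ c)=b\circ(a\circ c)$ for all $a,b,c$. *)

From mathcomp Require Import all_boot all_algebra.
Set Implicit Arguments. Unset Strict Implicit. Unset Printing Implicit Defensive.
Import GRing.Theory.
Local Open Scope ring_scope.

Definition bilinear_prod (R : comNzRingType) (A : lmodType R) (mul : A -> A -> A) : Prop :=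
  (forall (k : R) (a b c : A), mul (k *: a + b) c = k *: mul a c + mul b c) /\
  (forall (k : R) (a b c : A), mul a (k *: b + c) = k *: mul a b + mul a c).

Definition is_novikov (R : comNzRingType) (A : lmodType R) (mul : A -> A -> A) : Prop :=
  (forall a b c : A,
     mul a (mul b c) - mul (mul a b) c = mul a (mul c b) - mul (mul a c) b) /\
  (forall a b c : A, mul a (mul b c) = mul b (mul a c)).

Definition anticomm (R : comNzRingType) (A : lmodType R) (mul : A -> A -> A) (a b : A) : A :=
  mul a b + mul b a.
Definition comm (R : comNzRingType) (A : lmodType R) (mul : A -> A -> A) (a b : A) : A :=
  mul a b - mul b a.

From mathcomp Require Import all_boot all_algebra.
Set Implicit Arguments. Unset Strict Implicit.
Import GRing.Theory.
Local Open Scope ring_scope.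

(* Left-commutativity lets one move [z] out of [(x y) (z w)], and the right
   symmetry of the associator then shows that swapping [y] and [w] changes
   [(x y) (z w)] only by [x (z [y, w])].  This correction is symmetric in [x]
   and [z] and skew in [y] and [w], so the anticommutator [{x y, z w}] is
   invariant under [y <-> w].  Expanding [{[c, a], [b, d]}] bilinearly into
   four anticommutators and applying this invariance to each gives the
   identity. *)

Section NovikovAnticommutator.

Variables (R : comNzRingType) (A : lmodType R) (mul : A -> A -> A).
Hypotheses (mul_bilinear : bilinear_prod mul) (mul_novikov : is_novikov mul).

Local Notation "{ x , y }" := (anticomm mul x y).
Local Notation "[ x , y ]" := (comm mul x y).

Lemma mulBl x y z : mul (x - y) z = mul x z - mul y z.
Proof.
by have := mul_bilinear.1 (-1) y x z; rewrite !scaleN1r addrC => ->; rewrite addrC.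
Qed.

Lemma mulBr x y z : mul x (y - z) = mul x y - mul x z.
Proof.
by have := mul_bilinear.2 (-1) x z y; rewrite !scaleN1r addrC => ->; rewrite addrC.
Qed.

Lemma mulCA x y z : mul x (mul y z) = mul y (mul x z).
Proof. exact: mul_novikov.2. Qed.

Lemma mulAC_comm x y z : mul (mul x y) z - mul (mul x z) y = mul x [y, z].
Proof.
rewrite mulBr -[mul x (mul y z)](subrK (mul (mul x y) z)) mul_novikov.1.
by rewrite addrAC [_ - _ - mul x _]addrAC subrr add0r addrC.
Qed.

Lemma mul_prod_swap_comm x y z w :
  mul (mul x y) (mul z w) - mul (mul x w) (mul z y) = mul x (mul z [y, w]).
Proof.
by rewrite [mul _ (mul z w)]mulCA [mul _ (mul z y)]mulCA -mulBr mulAC_comm mulCA.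
Qed.

Lemma anticomm_prod_swap x y z w : {mul x y, mul z w} = {mul x w, mul z y}.
Proof.
apply/eqP; rewrite -subr_eq0 /anticomm opprD addrACA -[mul (mul z w) _ - _]opprB.
by rewrite !mul_prod_swap_comm mulCA subrr.
Qed.

Lemma anticommC x y : {x, y} = {y, x}.
Proof. exact: addrC. Qed.

Lemma anticommBl x y z : {x - y, z} = {x, z} - {y, z}.
Proof. by rewrite /anticomm mulBl mulBr opprD addrACA. Qed.

Lemma anticommBr x y z : {x, y - z} = {x, y} - {x, z}.
Proof. by rewrite anticommC anticommBl !(anticommC x). Qed.

End NovikovAnticommutator.

Theorem mainTheorem12 (R : comNzRingType) (A : lmodType R) (mul : A -> A -> A)
  (Hbil : bilinear_prod mul) (Hnov : is_novikov mul) (a b c d : A) :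
  anticomm mul (comm mul c a) (comm mul b d) =
    anticomm mul (mul d c) (mul a b) + anticomm mul (mul c d) (mul b a)
    - anticomm mul (mul b c) (mul a d) - anticomm mul (mul c b) (mul d a).
Proof.
rewrite /comm (anticommBl Hbil) !(anticommBr Hbil).
rewrite !(anticomm_prod_swap Hbil Hnov c a) !(anticomm_prod_swap Hbil Hnov a c).
rewrite (anticommC mul (mul a d)) (anticommC mul (mul a b)).
by rewrite opprB addrCA !addrA addrAC.
Qed.
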